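(* Let $n\ge 3$ and let $\mathcal N_{2n}$ be the neckband on $2n$ vertices. Then for every vertex $v$ of $\mathcal N_{2n}$, $\gamma_M(\mathcal N_{2n}-v)=\gamma_M(\mathcal N_{2n})-1$; that is, every vertex of $\mathcal N_{2n}$ is a 1-critical-vertex.
   Context: The neckband $\mathcal N_{2n}$ is the graph consisting of the $2n$-cycle $C_{2n}=v_1v_2\cdots v_{2n}v_1$ together with the $n$ chords $a_i=(v_{2i-1},v_{2i+2})$, $i=1,\dots,n$, where indices are taken modulo $2n$ (with representatives in $\{1,\dots,2n\}$). $\gamma_M(H)$ is the maximum genus of a connected graph $H$ (largest $k$ such that $H$ embeds cellularly in the orientable surface of genus $k$). A vertex $v$ is a 1-critical-vertex of $G$ if $G-v$ is connected and $\gamma_M(G-v)=\gamma_M(G)-1$. *)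

(* Graphs on a finite vertex type T, vertex set A : {set T},
   adjacency e : rel T (assumed symmetric/irreflexive where relevant).
   Cellular orientable embeddings are encoded combinatorially by rotation
   systems (Heffter-Edmonds): a permutation of the darts that cyclically
   permutes the darts at each vertex; faces = orbits of d |-> rho (rev d). *)
From mathcomp Require Import all_boot fingroup perm.
Set Implicit Arguments. Unset Strict Implicit. Unset Printing Implicit Defensive.

Section Graphs.
Variable T : finType.

Definition dart (A : {set T}) (e : rel T) (d : T * T) : bool :=
  [&& d.1 \in A, d.2 \in A & e d.1 d.2].

Definition rev_dart (d : T * T) : T * T := (d.2, d.1).

Definition n_edges (A : {set T}) (e : rel T) : nat := #|dart A e|./2.

Definition is_rotation (A : {set T}) (e : rel T) (rho : {perm T * T}) : bool :=
  [forall d, (dart A e d ==> (dart A e (rho d) && ((rho d).1 == d.1)))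
             && (~~ dart A e d ==> (rho d == d))]
  && [forall d, forall d',
        [&& dart A e d, dart A e d' & d.1 == d'.1] ==> fconnect rho d d'].

Definition face_step (rho : {perm T * T}) (d : T * T) : T * T := rho (rev_dart d).

Definition n_faces (A : {set T}) (e : rel T) (rho : {perm T * T}) : nat :=
  fcard (face_step rho) (dart A e).

(* (A, e) embeds cellularly in the orientable surface of genus k:
   some rotation system with Euler characteristic V - E + F = 2 - 2k. *)
Definition embeds_in_genus (A : {set T}) (e : rel T) (k : nat) : bool :=
  [exists rho : {perm T * T},
     is_rotation A e rho && (#|A| + n_faces A e rho + 2 * k == n_edges A e + 2)].

(* maximum genus: the largest such k (any such k is <= #|darts|) *)
Definition max_genus (A : {set T}) (e : rel T) : nat :=
  \max_(k < #|dart A e|.+1 | embeds_in_genus A e k) k.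

Definition induced (A : {set T}) (e : rel T) : rel T :=
  fun x y => [&& x \in A, y \in A & e x y].

Definition connected (A : {set T}) (e : rel T) : Prop :=
  forall x y, x \in A -> y \in A -> connect (induced A e) x y.

End Graphs.

(* The neckband N_{2n}: vertices v_1..v_{2n} are the ordinals 0..2n-1
   (v_j <-> j-1). Cycle edges j -- j+1 (mod 2n); chords
   a_i = (v_{2i-1}, v_{2i+2}) become (2i-2) -- (2i+1) (mod 2n), i.e. every
   even vertex x is joined to x+3 (mod 2n). *)
Definition nb_step (n : nat) (x y : 'I_(2 * n)) : bool :=
  val y == (val x + 1) %% (2 * n).

Definition nb_chord (n : nat) (x y : 'I_(2 * n)) : bool :=
  ~~ odd (val x) && (val y == (val x + 3) %% (2 * n)).

Definition neckband (n : nat) : rel 'I_(2 * n) :=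
  fun x y => [|| nb_step x y, nb_step y x, nb_chord x y | nb_chord y x].

From mathcomp Require Import all_boot fingroup perm.
From mathcomp Require Import zify.
Set Implicit Arguments. Unset Strict Implicit. Unset Printing Implicit Defensive.

(* Embeddings are rotation systems, so the maximum genus is read off from
   Euler's formula V + F + 2g = E + 2 once the number F of faces of a good
   rotation is known.  N_2n is cubic with V = 2n, E = 3n; deleting a vertex
   leaves V = 2n - 1, E = 3n - 3.  Since F >= 1 for every rotation, the genus
   is at most (n + 1)/2, resp. (n - 1)/2 after a deletion (rounding down).
   These bounds are attained by explicit rotations with one face (n odd) or
   two faces (n even): the uniform rotation with the orientation reversed at
   vertex 0 for N_2n, and for N_2n - 0 the uniform rotation with the deleted
   darts skipped.  The faces are traced by hand: every dart lies on the face
   of one of two given darts, which are joined for odd n and separated, by an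
   explicit invariant face, for even n.  Finally N_2n is vertex-transitive
   (rotations by even shifts, reflections through odd vertices), and maximum
   genus and connectivity are invariant under relabelling, which transfers
   the result from vertex 0 to every vertex. *)

Section Connections.
Variable V : finType.

Lemma fconnect_step (f : V -> V) x y : f x = y -> fconnect f x y.
Proof. by move=> <-; apply: fconnect1. Qed.

Lemma connect_chain (r : rel V) (g : nat -> V) a b :
  (forall i, a <= i < b -> connect r (g i) (g i.+1)) -> a <= b ->
  connect r (g a) (g b).
Proof.
elim: b => [|b IHb] step; first by rewrite leqn0 => /eqP ->.
rewrite leq_eqVlt => /orP [/eqP -> // | lt_ab].
apply: connect_trans (IHb _ lt_ab) (step _ _); last by lia.
by move=> i lt_i; apply: step; lia.
Qed.

Lemma connect_chain_down (r : rel V) (g : nat -> V) a b :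
  (forall i, b < i <= a -> connect r (g i) (g i.-1)) -> b <= a ->
  connect r (g a) (g b).
Proof.
elim: a => [|a IHa] step; first by rewrite leqn0 => /eqP ->.
rewrite leq_eqVlt => /orP [/eqP -> // | lt_ba].
apply: connect_trans (step a.+1 _) (IHa _ lt_ba); first by lia.
by move=> i lt_i; apply: step; lia.
Qed.

Lemma stable_set_separates (f : V -> V) (S : pred V) x y :
  injective f -> (forall d, S d -> S (f d)) -> ~~ S x -> S y -> ~~ fconnect f x y.
Proof.
move=> f_inj stS Sx Sy; apply/negP => xy.
have clS : fclosed f S.
  apply: intro_closed => [a b|a b /eqP <-]; [exact: fconnect_sym | exact: stS].
by have := closed_connect clS xy; rewrite -!topredE /= (negbTE Sx) Sy.
Qed.

End Connections.

Section RotationSystems.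
Variables (U : finType) (e : rel U).
Hypothesis e_sym : symmetric e.

Lemma rev_dartK : involutive (@rev_dart U).
Proof. by case. Qed.

Lemma dart_rev A d : dart A e (rev_dart d) = dart A e d.
Proof. by case: d => x y; rewrite /dart /= e_sym andbCA andbA. Qed.

Lemma rotationP A (rho : {perm U * U}) : is_rotation A e rho ->
  [/\ forall d, dart A e d -> dart A e (rho d) /\ (rho d).1 = d.1,
      forall d, ~~ dart A e d -> rho d = d &
      forall d d', dart A e d -> dart A e d' -> d.1 = d'.1 -> fconnect rho d d'].
Proof.
case/andP=> /forallP rho_dart /forallP rho_cycle; split.
- by move=> d Dd; have /andP[/implyP /(_ Dd) /andP[-> /eqP ->] _] := rho_dart d.
- by move=> d Dd; have /andP[_ /implyP /(_ Dd) /eqP ->] := rho_dart d.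
- move=> d d' Dd Dd' same_tail; have /forallP /(_ d') /implyP := rho_cycle d.
  by apply; rewrite Dd Dd' same_tail eqxx.
Qed.

(* All rotations used below
   have this shape, which makes the cyclicity condition easy to check. *)
Definition deg3_rotation A (rho : U * U -> U * U) :=
  [/\ forall d, dart A e d -> dart A e (rho d) /\ (rho d).1 = d.1,
      forall d, ~~ dart A e d -> rho d = d &
      forall d d', dart A e d -> dart A e d' -> d.1 = d'.1 ->
        [\/ d' = d, d' = rho d | d' = rho (rho d)]].

Lemma deg3_rotation_is_rotation A (rho : {perm U * U}) :
  deg3_rotation A rho -> is_rotation A e rho.
Proof.
case=> rho_dart rho_fix rho_orbit; apply/andP; split; apply/forallP => d.
  case: (boolP (dart A e d)) => Dd /=; last by rewrite rho_fix.
  by have [-> ->] := rho_dart d Dd; rewrite eqxx.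
apply/forallP => d'; apply/implyP => /and3P [Dd Dd' /eqP same_tail].
case: (rho_orbit d d' Dd Dd' same_tail) => ->;
  [exact: connect0 | exact: fconnect1 | exact: (fconnect_iter _ 2)].
Qed.

Lemma face_step_inj (rho : {perm U * U}) : injective (face_step rho).
Proof. exact: inj_comp (@perm_inj _ rho) (can_inj rev_dartK). Qed.

Lemma face_connect_sym (rho : {perm U * U}) :
  connect_sym (coerced_frel (face_step rho)).
Proof. exact: fconnect_sym (@face_step_inj rho). Qed.

Lemma face_closed A (rho : {perm U * U}) : is_rotation A e rho ->
  fclosed (face_step rho) (dart A e).
Proof.
case/rotationP=> rho_dart _ _; apply: intro_closed; first exact: face_connect_sym.
move=> x y /eqP <- Dx; rewrite /face_step.
by have [] := rho_dart (rev_dart x); rewrite ?dart_rev.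
Qed.

Lemma n_faces_gt0 A (rho : {perm U * U}) : is_rotation A e rho ->
  (exists d, dart A e d) -> 0 < n_faces A e rho.
Proof.
move=> rot [d Dd]; apply/(fcard_gt0P (@face_step_inj rho) (face_closed rot)).
by exists d.
Qed.

Lemma n_faces_two A (rho : {perm U * U}) d0 d1 : is_rotation A e rho ->
  dart A e d0 -> dart A e d1 ->
  (forall d, dart A e d ->
     fconnect (face_step rho) d0 d || fconnect (face_step rho) d1 d) ->
  n_faces A e rho = (~~ fconnect (face_step rho) d0 d1).+1.
Proof.
move=> rot D0 D1 cover; rewrite /n_faces -(n_comp_closure2 (face_connect_sym rho)).
apply: eq_n_comp_r => x; rewrite /closure_mem -!topredE /=.
apply/idP/idP => [Dx | ].
  apply/negP => disj; case/orP: (cover x Dx) => fx.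
    have := disjointFr disj (x := d0).
    by rewrite -!topredE /= face_connect_sym fx eqxx => /(_ isT).
  have := disjointFr disj (x := d1).
  by rewrite -!topredE /= face_connect_sym fx eqxx orbT => /(_ isT).
apply: contraR => Dx; apply/pred0P => z /=.
apply/andP => [[xz]]; rewrite !inE => /orP [] /eqP z_d; subst z;
  by move: Dx; have := closed_connect (face_closed rot) xz;
     rewrite -!topredE /= => ->; rewrite ?D0 ?D1.
Qed.

(* Euler's formula with at least one face bounds the genus of any embedding. *)
Lemma genus_bound A k : embeds_in_genus A e k -> (exists d, dart A e d) ->
  2 * k + #|A| + 1 <= n_edges A e + 2.
Proof.
case/existsP=> rho /andP [rot /eqP euler] nonempty.
by have := n_faces_gt0 rot nonempty; rewrite -euler; lia.
Qed.

Lemma max_genus_eq A k0 : embeds_in_genus A e k0 -> k0 <= #|dart A e| ->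
  (forall k, embeds_in_genus A e k -> k <= k0) -> max_genus A e = k0.
Proof.
move=> emb k0_le ub; apply/eqP; rewrite eqn_leq; apply/andP; split.
  by apply/bigmax_leqP => i /ub.
exact: (@leq_bigmax_cond _ (fun i : 'I_(#|dart A e|.+1) => embeds_in_genus A e i)
          (fun i => nat_of_ord i) (Ordinal (k0_le : k0 < #|dart A e|.+1)) emb).
Qed.

End RotationSystems.

(* Deleting a vertex v from a graph with a degree-3 rotation rho: at every
   remaining vertex, skip over the (at most one) dart pointing to v. *)
Section VertexDeletion.
Variables (U : finType) (e : rel U) (A : {set U}) (v : U) (rho : {perm U * U}).
Hypothesis rho_deg3 : deg3_rotation e A rho.

Local Notation Dv := (dart (A :\ v) e).

Lemma dart_setD1 d : Dv d = [&& dart A e d, d.1 != v & d.2 != v].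
Proof.
case: d => x y; rewrite /dart /= !inE.
by case: (x == v); case: (y == v); case: (x \in A); case: (y \in A); case: (e x y).
Qed.

Lemma skip_once d : Dv d -> ~~ Dv (rho d) -> Dv (rho (rho d)).
Proof.
case: rho_deg3 => rho_dart _ _ Dd; move: (Dd); rewrite dart_setD1.
case/and3P=> DAd d1v d2v; have [DA1 tail1] := rho_dart d DAd.
have [DA2 tail2] := rho_dart _ DA1.
rewrite !dart_setD1 DA1 DA2 tail2 tail1 d1v /= => /negbNE /eqP head1.
apply/eqP => head2; have rho2_fix : rho (rho d) = rho d.
  by apply/eqP; rewrite -pair_eqE /pair_eq tail2 head1 head2 !eqxx.
by move: d2v; rewrite -(perm_inj rho2_fix) head1 eqxx.
Qed.

Definition skip_step d :=
  if Dv d then (if Dv (rho d) then rho d else rho (rho d)) else d.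

Lemma skip_step_dart d : Dv d -> Dv (skip_step d) /\ (skip_step d).1 = d.1.
Proof.
move=> Dd; rewrite /skip_step Dd; case: rho_deg3 => rho_dart _ _.
have [DA1 tail1] := rho_dart d (proj1 (andP (etrans (esym (dart_setD1 d)) Dd))).
case: (boolP (Dv (rho d))) => // Dn1; split; first exact: skip_once.
by have [_ ->] := rho_dart _ DA1.
Qed.

Lemma skip_step_inj : injective skip_step.
Proof.
move=> d d'; case: (boolP (Dv d)) => Dd; case: (boolP (Dv d')) => Dd'.
- rewrite /skip_step Dd Dd'.
  case: (boolP (Dv (rho d))) => D1; case: (boolP (Dv (rho d'))) => D1'.
  + exact: perm_inj.
  + by move=> /perm_inj eq_d; move: D1'; rewrite -eq_d Dd.
  + by move=> /perm_inj eq_d; move: D1; rewrite eq_d Dd'.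
  + by move=> /perm_inj /perm_inj.
- move=> eq_d; have fix_d' : skip_step d' = d' by rewrite /skip_step (negbTE Dd').
  by move: Dd'; rewrite -fix_d' -eq_d (skip_step_dart Dd).1.
- move=> eq_d; have fix_d : skip_step d = d by rewrite /skip_step (negbTE Dd).
  by move: Dd; rewrite -fix_d eq_d (skip_step_dart Dd').1.
- by rewrite /skip_step (negbTE Dd) (negbTE Dd').
Qed.

Definition skip_rotation : {perm U * U} := perm skip_step_inj.

Lemma skip_rotationE d : skip_rotation d = skip_step d.
Proof. by rewrite permE. Qed.

Lemma skip_deg3_rotation : deg3_rotation e (A :\ v) skip_rotation.
Proof.
case: (rho_deg3) => _ _ rho_orbit; split.
- by move=> d Dd; rewrite skip_rotationE; apply: skip_step_dart.
- by move=> d Dd; rewrite skip_rotationE /skip_step (negbTE Dd).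
move=> d d' Dd Dd' same_tail; rewrite !skip_rotationE.
have DA (x : U * U) : Dv x -> dart A e x by rewrite dart_setD1 => /andP [].
case: (rho_orbit d d' (DA _ Dd) (DA _ Dd') same_tail) => d'E; subst d'.
- by constructor 1.
- by constructor 2; rewrite /skip_step Dd Dd'.
- case: (boolP (Dv (rho d))) => D1; last by constructor 2; rewrite /skip_step Dd (negbTE D1).
  by constructor 3; rewrite {2}/skip_step Dd D1 /skip_step D1 Dd'.
Qed.

End VertexDeletion.

Section Relabelling.
Variables (U : finType) (e : rel U) (phi : {perm U}).
Hypothesis e_sym : symmetric e.
Hypothesis phi_aut : forall x y, e (phi x) (phi y) = e x y.

Definition lift_dart (d : U * U) := (phi d.1, phi d.2).

Lemma lift_dart_inj : injective lift_dart.
Proof. by case=> a b [c d] [/perm_inj -> /perm_inj ->]. Qed.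

Definition dart_perm : {perm U * U} := perm lift_dart_inj.

Lemma dart_permE d : dart_perm d = (phi d.1, phi d.2).
Proof. by rewrite permE. Qed.

Lemma dart_image (A : {set U}) d : dart (phi @: A) e (dart_perm d) = dart A e d.
Proof.
case: d => x y; rewrite dart_permE /dart /= phi_aut !mem_imset //; exact: perm_inj.
Qed.

Definition relabel (rho : {perm U * U}) : {perm U * U} :=
  (dart_perm^-1 * rho * dart_perm)%g.

Lemma relabelE rho d : relabel rho (dart_perm d) = dart_perm (rho d).
Proof. by rewrite /relabel !permM permK. Qed.

Lemma fconnect_relabel rho d d' :
  fconnect (relabel rho) (dart_perm d) (dart_perm d') = fconnect rho d d'.
Proof.
have iterE k x : iter k (relabel rho) (dart_perm x) = dart_perm (iter k rho x).
  by elim: k => //= k ->; rewrite relabelE.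
apply/idP/idP => conn.
  have := iter_findex conn; rewrite iterE => /perm_inj <-; exact: fconnect_iter.
by have := iter_findex conn => <-; rewrite -iterE; apply: fconnect_iter.
Qed.

Lemma face_step_relabel rho d :
  face_step (relabel rho) (dart_perm d) = dart_perm (face_step rho d).
Proof. by rewrite /face_step -relabelE !dart_permE. Qed.

Lemma rotation_relabel (A : {set U}) rho :
  is_rotation A e rho -> is_rotation (phi @: A) e (relabel rho).
Proof.
case/rotationP=> rho_dart rho_fix rho_cycle.
apply/andP; split; apply/forallP => d; rewrite -(permKV dart_perm d).
  rewrite relabelE !dart_image.
  case: (boolP (dart A e _)) => Dd /=; last by rewrite rho_fix.
  by have [-> tail] := rho_dart _ Dd; rewrite !dart_permE /= tail eqxx.
apply/forallP => d'; rewrite -(permKV dart_perm d') fconnect_relabel !dart_image.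
apply/implyP => /and3P [Dd Dd' same]; apply: rho_cycle => //.
by move: same; rewrite !dart_permE /= (inj_eq perm_inj) => /eqP.
Qed.

Lemma card_dart_relabel (A : {set U}) : #|dart (phi @: A) e| = #|dart A e|.
Proof.
rewrite -(card_image lift_dart_inj (dart A e)); apply: eq_card => d.
rewrite -!topredE /=; apply/idP/imageP => [Dd | [d0 Dd0 ->]].
  exists ((dart_perm^-1)%g d); last by rewrite /lift_dart -dart_permE permKV.
  by rewrite -topredE /= -dart_image permKV.
by rewrite /lift_dart -dart_permE dart_image.
Qed.

Lemma n_faces_relabel (A : {set U}) rho : is_rotation A e rho ->
  n_faces (phi @: A) e (relabel rho) = n_faces A e rho.
Proof.
move=> rot; rewrite /n_faces.
have closed := face_closed e_sym (rotation_relabel rot).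
rewrite (adjunction_n_comp dart_perm (face_connect_sym _) (face_connect_sym rho)
                             closed).
  by apply: eq_n_comp_r => d; rewrite !inE -!topredE /= dart_image.
apply: strict_adjunction => //.
- exact: face_connect_sym.
- exact: (@perm_inj _ dart_perm).
- by apply/subsetP => d _; rewrite -(permKV dart_perm d) codom_f.
- by move=> x y _ /=; rewrite face_step_relabel (inj_eq perm_inj).
Qed.

Lemma embeds_relabel (A : {set U}) k :
  embeds_in_genus A e k -> embeds_in_genus (phi @: A) e k.
Proof.
case/existsP=> rho /andP [rot euler]; apply/existsP; exists (relabel rho).
rewrite rotation_relabel //= n_faces_relabel // card_imset; last exact: perm_inj.
by rewrite /n_edges card_dart_relabel.
Qed.

Lemma connected_relabel (A : {set U}) : connected A e -> connected (phi @: A) e.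
Proof.
have memA x : ((phi^-1)%g x \in A) = (x \in phi @: A).
  by rewrite -(mem_imset _ _ (@perm_inj _ phi)) permKV.
move=> connA x y Ax Ay; have := connA _ _ (etrans (memA x) Ax) (etrans (memA y) Ay).
case/connectP => p path_p last_p; apply/connectP; exists (map phi p).
  clear last_p; move: path_p; rewrite -{2}(permKV phi x).
  elim: p ((phi^-1)%g x) => //= a p IHp b.
  by case/andP=> ab path_p; rewrite IHp // andbT /induced phi_aut -!memA !permK.
by rewrite -{1}(permKV phi x) last_map -last_p permKV.
Qed.

End Relabelling.

Section Handshake.
Variables (U : finType) (e : rel U).
Hypotheses (e_sym : symmetric e) (e_irr : irreflexive e).

Definition degree (A : {set U}) (x : U) : nat := #|[set y in A | e x y]|.

Lemma card_dart (A : {set U}) : #|dart A e| = \sum_(x in A) degree A x.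
Proof.
transitivity (\sum_(x in A) \sum_(y | (y \in A) && e x y) 1).
  by rewrite pair_big_dep -sum1_card; apply: eq_bigl => -[x y].
apply: eq_bigr => x _; rewrite sum1dep_card /degree.
by apply: eq_card => y; rewrite !inE.
Qed.

(* Deleting v removes the darts leaving v and those entering it. *)
Lemma card_dart_setD1 (A : {set U}) v : v \in A ->
  #|dart A e| = #|dart (A :\ v) e| + 2 * degree A v.
Proof.
move=> Av; rewrite !card_dart (bigD1 v) //=.
have degD1 x : x \in A :\ v -> degree A x = e x v + degree (A :\ v) x.
  rewrite !inE => /andP [xv Ax]; rewrite /degree (cardsD1 v) !inE Av /=.
  by congr (_ + _); apply: eq_card => y; rewrite !inE andbA.
rewrite (eq_bigl (fun x => x \in A :\ v)); last by move=> x; rewrite !inE andbC.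
rewrite (eq_bigr _ degD1) big_split /=.
have -> : \sum_(x in A :\ v) (e x v : nat) = degree A v.
  rewrite -big_mkcondr /= sum1dep_card /degree; apply: eq_card => y.
  by rewrite !inE e_sym; case: eqP => [->|]; rewrite ?e_irr ?andbF.
lia.
Qed.

End Handshake.

Variant mod_lt_double_spec (N a : nat) : nat -> Type :=
  | ModSmall : a < N -> mod_lt_double_spec N a a
  | ModWrap : N <= a -> mod_lt_double_spec N a (a - N).

Lemma mod_lt_doubleP N a : a < 2 * N -> mod_lt_double_spec N a (a %% N).
Proof.
move=> lt_a; case: (ltnP a N) => [lt_aN | le_Na]; first by rewrite modn_small //; constructor.
have -> : a %% N = a - N by rewrite -{1}(subnK le_Na) modnDr modn_small; lia.
by constructor.
Qed.

(* Decision procedure for the modular arithmetic on vertex indices: record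
   the bounds of all ordinals, split every reduction [a %% N] with [a < 2N]
   and every boolean test, then close all cases by lia. *)
Ltac ord_bounds :=
  repeat match goal with x : _ |- _ =>
    lazymatch goal with _ : is_true (nat_of_ord x < _) |- _ => fail
    | _ => have := @ltn_ord _ x; move=> ? end end.

Ltac mod_split :=
  match goal with
  | |- context [?a %% ?N] =>
      lazymatch a with context [_ %% _] => fail | _ =>
      case: (@mod_lt_doubleP N a ltac:(lia)) => ? end
  | |- context [if ?b then _ else _] =>
      lazymatch b with context [_ %% _] => fail | _ =>
        let E := fresh "E" in case E: b end
  end.

Ltac mod_arith := ord_bounds; repeat mod_split; lia.

Ltac vtx_arith :=
  try (first [apply: val_inj | rewrite -!val_eqE]); rewrite /=; mod_arith.

Section NeckbandNeighbours.
Variable n : nat.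
Hypothesis n_ge3 : 3 <= n.
Local Notation N := (2 * n).
Local Notation T := 'I_(2 * n).
Local Notation e := (@neckband n).

Lemma N_gt0 : 0 < N. Proof. lia. Qed.

Definition vtx (k : nat) : T := Ordinal (ltn_pmod k N_gt0).

Lemma vtxK (x : T) : vtx x = x.
Proof. by apply: val_inj; rewrite /= modn_small. Qed.

Definition nxt (x : T) : T := vtx (x + 1).
Definition prv (x : T) : T := vtx (x + N - 1).
Definition mate (x : T) : T := vtx (if odd x then x + N - 3 else x + 3).

Lemma neckbandE x y : e x y = [|| y == nxt x, y == prv x | y == mate x].
Proof.
rewrite /neckband /nb_step /nb_chord -!val_eqE /=.
by case: (odd x) / boolP => odd_x /=; apply/idP/idP; mod_arith.
Qed.

Lemma nxtK x : prv (nxt x) = x. Proof. vtx_arith. Qed.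
Lemma prvK x : nxt (prv x) = x. Proof. vtx_arith. Qed.
Lemma mateK x : mate (mate x) = x. Proof. vtx_arith. Qed.

(* Since 2n >= 6, a vertex and its three neighbours are pairwise distinct. *)
Lemma neighbours_neq x :
  ((nxt x == x) = false) * ((prv x == x) = false) * ((mate x == x) = false)
  * ((nxt x == prv x) = false) * ((nxt x == mate x) = false)
  * ((prv x == mate x) = false) * ((prv x == nxt x) = false)
  * ((mate x == nxt x) = false) * ((mate x == prv x) = false).
Proof. by do !split; vtx_arith. Qed.

Lemma neckband_sym : symmetric e.
Proof. by move=> x y; rewrite /neckband orbCA [nb_chord y x || _]orbC. Qed.

Lemma neckband_irr : irreflexive e.
Proof. by move=> x; rewrite neckbandE ![x == _]eq_sym !neighbours_neq. Qed.

Lemma neighbourP x y : e x y -> [\/ y = nxt x, y = prv x | y = mate x].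
Proof.
by rewrite neckbandE => /or3P [] /eqP ->; [constructor 1 | constructor 2 | constructor 3].
Qed.

Lemma adj_nxt x : e x (nxt x). Proof. by rewrite neckbandE eqxx. Qed.
Lemma adj_prv x : e x (prv x). Proof. by rewrite neckbandE eqxx orbT. Qed.
Lemma adj_mate x : e x (mate x). Proof. by rewrite neckbandE eqxx !orbT. Qed.

Lemma neckband_degree x : degree e [set: T] x = 3.
Proof.
rewrite /degree; have -> : [set y in [set: T] | e x y] = [set nxt x; prv x; mate x].
  by apply/setP => y; rewrite !inE neckbandE orbA.
by rewrite setUC cardsU1 cards2 !inE !neighbours_neq.
Qed.

End NeckbandNeighbours.

Section NeckbandRotations.
Variable n : nat.
Hypothesis n_ge3 : 3 <= n.
Local Notation T := 'I_(2 * n).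
Local Notation e := (@neckband n).
Local Notation nxt := (nxt n_ge3).
Local Notation prv := (prv n_ge3).
Local Notation mate := (mate n_ge3).

Definition fwd (x : T) := (x, nxt x).
Definition bwd (x : T) := (x, prv x).
Definition chd (x : T) := (x, mate x).

Definition turn (flip : pred T) (x y : T) : T :=
  if y == nxt x then (if flip x then mate x else prv x)
  else if y == prv x then (if flip x then nxt x else mate x)
  else if y == mate x then (if flip x then prv x else nxt x)
  else y.

Section Turn.
Variable flip : pred T.

Lemma turn_nxt x : turn flip x (nxt x) = if flip x then mate x else prv x.
Proof. by rewrite /turn eqxx. Qed.

Lemma turn_prv x : turn flip x (prv x) = if flip x then nxt x else mate x.
Proof. by rewrite /turn eqxx !neighbours_neq. Qed.

Lemma turn_mate x : turn flip x (mate x) = if flip x then prv x else nxt x.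
Proof. by rewrite /turn eqxx !neighbours_neq. Qed.

Lemma turn_id x y : ~~ e x y -> turn flip x y = y.
Proof. by rewrite neckbandE /turn => /norP [/negbTE -> /norP [/negbTE -> /negbTE ->]]. Qed.

Lemma turn_order3 x y : turn flip x (turn flip x (turn flip x y)) = y.
Proof.
case: (boolP (e x y)) => [/neighbourP | not_adj]; last by rewrite !turn_id.
by case=> ->; case fx: (flip x); do 3 rewrite ?turn_nxt ?turn_prv ?turn_mate ?fx.
Qed.

Lemma turn_adj x y : e x y -> e x (turn flip x y).
Proof.
case/neighbourP => ->; rewrite ?turn_nxt ?turn_prv ?turn_mate;
  by case: (flip x); rewrite ?adj_nxt ?adj_prv ?adj_mate.
Qed.

Definition rot_step (d : T * T) := (d.1, turn flip d.1 d.2).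

Lemma rot_step_inj : injective rot_step.
Proof.
by case=> x y [x' y'] [/= <- eq_turn]; rewrite -(turn_order3 x y) eq_turn turn_order3.
Qed.

Definition nb_rot : {perm T * T} := perm rot_step_inj.

Lemma nb_rotE d : nb_rot d = (d.1, turn flip d.1 d.2).
Proof. by rewrite permE. Qed.

Lemma dart_setT d : dart [set: T] e d = e d.1 d.2.
Proof. by case: d => x y; rewrite /dart !inE. Qed.

Lemma nb_rot_deg3 : deg3_rotation e [set: T] nb_rot.
Proof.
split=> [[x y]|[x y]|[x y] [x' y']]; rewrite !dart_setT !nb_rotE /=.
- by move=> adj; split=> //; apply: turn_adj.
- by move=> not_adj; rewrite turn_id.
move=> adj adj' same; subst x'.
case/neighbourP: adj => ->; case/neighbourP: adj' => ->; case fx: (flip x);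
  rewrite ?turn_nxt ?turn_prv ?turn_mate fx ?turn_nxt ?turn_prv ?turn_mate fx;
  by [constructor 1 | constructor 2 | constructor 3].
Qed.

Lemma face_fwd x :
  face_step nb_rot (fwd x) = if flip (nxt x) then fwd (nxt x) else chd (nxt x).
Proof.
rewrite /face_step nb_rotE /= -[X in turn _ _ X](nxtK n_ge3 x) turn_prv.
by case: (flip _).
Qed.

Lemma face_bwd x :
  face_step nb_rot (bwd x) = if flip (prv x) then chd (prv x) else bwd (prv x).
Proof.
rewrite /face_step nb_rotE /= -[X in turn _ _ X](prvK n_ge3 x) turn_nxt.
by case: (flip _).
Qed.

Lemma face_chd x :
  face_step nb_rot (chd x) = if flip (mate x) then bwd (mate x) else fwd (mate x).
Proof.
rewrite /face_step nb_rotE /= -[X in turn _ _ X](mateK n_ge3 x) turn_mate.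
by case: (flip _).
Qed.

End Turn.
End NeckbandRotations.

Section DeletedRotation.
Variable n : nat.
Hypothesis n_ge3 : 3 <= n.
Local Notation T := 'I_(2 * n).
Local Notation e := (@neckband n).
Local Notation nxt := (nxt n_ge3).
Local Notation prv := (prv n_ge3).
Local Notation mate := (mate n_ge3).
Local Notation fwd := (fwd n_ge3).
Local Notation bwd := (bwd n_ge3).
Local Notation chd := (chd n_ge3).
Variable b : T.

Definition del_rot : {perm T * T} := skip_rotation b (nb_rot_deg3 n_ge3 pred0).

Lemma dart_del d : dart ([set: T] :\ b) e d = [&& e d.1 d.2, d.1 != b & d.2 != b].
Proof. by rewrite dart_setD1 dart_setT. Qed.

Lemma del_rot_deg3 : deg3_rotation e ([set: T] :\ b) del_rot.
Proof. exact: skip_deg3_rotation. Qed.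

Lemma face_fwd_del x : x != b -> nxt x != b ->
  face_step del_rot (fwd x) = if mate (nxt x) == b then fwd (nxt x) else chd (nxt x).
Proof.
move=> xb nxb; rewrite /face_step skip_rotationE /skip_step !dart_del /= xb nxb.
rewrite neckband_sym adj_nxt !nb_rotE /= -[X in turn _ _ _ X](nxtK n_ge3 x).
rewrite turn_prv /= nxb adj_mate.
by case: eqP => //= _; rewrite turn_mate.
Qed.

Lemma face_bwd_del x : x != b -> prv x != b ->
  face_step del_rot (bwd x) = if prv (prv x) == b then chd (prv x) else bwd (prv x).
Proof.
move=> xb pxb; rewrite /face_step skip_rotationE /skip_step !dart_del /= xb pxb.
rewrite neckband_sym adj_prv !nb_rotE /= -[X in turn _ _ _ X](prvK n_ge3 x).
rewrite turn_nxt /= pxb adj_prv.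
by case: eqP => //= _; rewrite turn_prv.
Qed.

Lemma face_chd_del x : x != b -> mate x != b ->
  face_step del_rot (chd x) = if nxt (mate x) == b then bwd (mate x) else fwd (mate x).
Proof.
move=> xb mxb; rewrite /face_step skip_rotationE /skip_step !dart_del /= xb mxb.
rewrite neckband_sym adj_mate !nb_rotE /= -[X in turn _ _ _ X](mateK n_ge3 x).
rewrite turn_mate /= mxb adj_nxt.
by case: eqP => //= _; rewrite turn_nxt.
Qed.

End DeletedRotation.

(* Faces of N_2n under the uniform rotation reversed at vertex 0.  Away from
   vertex 0 a face runs fwd k -> chd (k+1) -> fwd (mate (k+1)): it climbs
   through odd k in steps of 4 and descends through even k in steps of 2,
   while a face entering bwd j descends along the cycle. *)
Section FullGraphFaces.
Variable n : nat.
Hypothesis n_ge3 : 3 <= n.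
Local Notation N := (2 * n).
Local Notation T := 'I_(2 * n).
Local Notation e := (@neckband n).
Local Notation vtx := (vtx n_ge3).
Local Notation nxt := (nxt n_ge3).
Local Notation prv := (prv n_ge3).
Local Notation mate := (mate n_ge3).
Local Notation fwd := (fwd n_ge3).
Local Notation bwd := (bwd n_ge3).
Local Notation chd := (chd n_ge3).
Local Notation z0 := (vtx 0).
Local Notation rot := (nb_rot n_ge3 (pred1 z0)).
Local Notation fc := (fconnect (face_step rot)).

Lemma full_fwd_step k : k.+1 < N -> fc (fwd (vtx k)) (chd (vtx k.+1)).
Proof.
move=> lt_k; apply: fconnect_step; rewrite face_fwd /=.
have -> : (nxt (vtx k) == z0) = false by vtx_arith.
by have -> : nxt (vtx k) = vtx k.+1 by vtx_arith.
Qed.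

Lemma full_bwd_step j : 2 <= j <= N -> fc (bwd (vtx j)) (bwd (vtx j.-1)).
Proof.
move=> j_range; apply: fconnect_step; rewrite face_bwd /=.
have -> : (prv (vtx j) == z0) = false by vtx_arith.
by have -> : prv (vtx j) = vtx j.-1 by vtx_arith.
Qed.

Lemma full_fwd_up k : odd k -> k + 4 <= N - 1 -> fc (fwd (vtx k)) (fwd (vtx (k + 4))).
Proof.
move=> odd_k lt_k; apply: connect_trans (full_fwd_step _) _; first by lia.
apply: fconnect_step; rewrite face_chd /=.
have -> : (mate (vtx k.+1) == z0) = false by vtx_arith.
by have -> : mate (vtx k.+1) = vtx (k + 4) by vtx_arith.
Qed.

Lemma full_fwd_down k : ~~ odd k -> 4 <= k <= N - 2 ->
  fc (fwd (vtx k)) (fwd (vtx (k - 2))).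
Proof.
move=> even_k k_range; apply: connect_trans (full_fwd_step _) _; first by lia.
apply: fconnect_step; rewrite face_chd /=.
have -> : (mate (vtx k.+1) == z0) = false by vtx_arith.
by have -> : mate (vtx k.+1) = vtx (k - 2) by vtx_arith.
Qed.

Definition full_face0 := bwd z0.
Definition full_face1 := fwd (vtx 1).
Local Notation on_faces d := (fc full_face0 d || fc full_face1 d).

Lemma full_on_faces_trans a b : on_faces a -> fc a b -> on_faces b.
Proof. by case/orP=> conn ab; rewrite (connect_trans conn ab) ?orbT. Qed.

Lemma full_bwd_face j : j < N -> fc full_face0 (bwd (vtx j)).
Proof.
move=> lt_j; case: (posnP j) => [-> | j_gt0]; first exact: connect0.
have -> : full_face0 = bwd (vtx N) by congr (_, _); vtx_arith.
apply: (@connect_chain_down _ _ (fun i => bwd (vtx i))) => [i i_range|]; last by lia.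
by apply: full_bwd_step; lia.
Qed.

Lemma full_chd0_face : fc full_face0 (chd z0).
Proof.
apply: connect_trans (full_bwd_face (j := 1) _) _; first by lia.
apply: fconnect_step; rewrite face_bwd /=.
have -> : prv (vtx 1) = z0 by vtx_arith.
by rewrite eqxx.
Qed.

Lemma full_fwd3_face : fc full_face0 (fwd (vtx 3)).
Proof.
apply: connect_trans full_chd0_face (fconnect_step _); rewrite face_chd /=.
have -> : (mate z0 == z0) = false by vtx_arith.
by have -> : mate z0 = vtx 3 by vtx_arith.
Qed.

Lemma full_fwd_run a i : odd a -> a + 4 * i <= N - 1 ->
  fc (fwd (vtx a)) (fwd (vtx (a + 4 * i))).
Proof.
move=> odd_a le_ai.
have := @connect_chain _ _ (fun j => fwd (vtx (a + 4 * j))) 0 i.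
rewrite /= muln0 addn0; apply=> // j lt_j.
by rewrite mulnSr addnA; apply: full_fwd_up; lia.
Qed.

Lemma full_fwd_odd_face k : odd k -> k < N -> on_faces (fwd (vtx k)).
Proof.
move=> odd_k lt_k; case: (boolP (k %% 4 == 1)) => k_mod.
  have -> : k = 1 + 4 * (k %/ 4) by lia.
  by rewrite (full_fwd_run (a := 1)) ?orbT //; lia.
have -> : k = 3 + 4 * (k %/ 4) by lia.
by rewrite (connect_trans full_fwd3_face (full_fwd_run (a := 3) _ _)) //; lia.
Qed.

Lemma full_fwd_even_face k : ~~ odd k -> k < N -> on_faces (fwd (vtx k)).
Proof.
move=> even_k lt_k.
have on_fwd0 : on_faces (fwd z0).
  apply: full_on_faces_trans (full_fwd_odd_face (k := N - 1) _ _) _; try lia.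
  apply: fconnect_step; rewrite face_fwd /=.
  have -> : nxt (vtx (N - 1)) = z0 by vtx_arith.
  by rewrite eqxx.
case: (posnP k) => [-> // | k_gt0].
apply: full_on_faces_trans on_fwd0 _.
apply: connect_trans (full_fwd_step (k := 0) _) _; first by lia.
apply: (connect_trans (y := fwd (vtx (2 * (n - 1))))).
  apply: fconnect_step; rewrite face_chd /=.
  have -> : (mate (vtx 1) == z0) = false by vtx_arith.
  by have -> : mate (vtx 1) = vtx (2 * (n - 1)) by vtx_arith.
have -> : k = 2 * (k %/ 2) by lia.
apply: (@connect_chain_down _ _ (fun i => fwd (vtx (2 * i)))) => [i i_range|]; last by lia.
have -> : 2 * i.-1 = 2 * i - 2 by lia.
by apply: full_fwd_down; lia.
Qed.

Lemma full_cover d : dart [set: T] e d -> on_faces d.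
Proof.
have fwd_face k : k < N -> on_faces (fwd (vtx k)).
  by case: (boolP (odd k)); [apply: full_fwd_odd_face | apply: full_fwd_even_face].
case: d => x y; rewrite dart_setT /= => /neighbourP [] ->; rewrite -(vtxK n_ge3 x).
- exact: fwd_face.
- by rewrite full_bwd_face.
have lt_x := ltn_ord x; case: (posnP x) => [x0 | x_gt0].
  by rewrite x0 full_chd0_face.
apply: full_on_faces_trans (fwd_face x.-1 _) _; first by lia.
have -> : x = x.-1.+1 :> nat by lia.
by apply: full_fwd_step; lia.
Qed.

Lemma full_faces_joined : odd n -> fc full_face0 full_face1.
Proof.
move=> odd_n; apply: connect_trans full_fwd3_face _.
apply: connect_trans (full_fwd_run (a := 3) (i := (n - 3) %/ 2) _ _) _; try lia.
have -> : 3 + 4 * ((n - 3) %/ 2) = (N - 3) by lia.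
apply: connect_trans (full_fwd_step (k := N - 3) _) (fconnect_step _); first by lia.
rewrite face_chd /=; have -> : (mate (vtx (N - 3).+1) == z0) = false by vtx_arith.
by have -> : mate (vtx (N - 3).+1) = vtx 1 by vtx_arith.
Qed.

(* When 4 divides 2n, the darts [fwd x] with x = 1 (mod 4) and [chd x] with
   x = 2 (mod 4) form a face; it avoids [vtx 0] and its neighbours. *)
Definition quarter_face (d : T * T) :=
  (d.2 == nxt d.1) && (d.1 %% 4 == 1) || (d.2 == mate d.1) && (d.1 %% 4 == 2).

Lemma full_faces_split : ~~ odd n -> ~~ fc full_face0 full_face1.
Proof.
move=> even_n; apply: (@stable_set_separates _ _ quarter_face);
  [exact: face_step_inj | move=> [x y] | | ]; rewrite /quarter_face /=.
- case/orP=> /andP [/eqP -> x_mod].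
    rewrite -[face_step _ _]/(face_step rot (fwd x)) face_fwd /=.
    have -> : (nxt x == z0) = false by vtx_arith.
    by rewrite /= eqxx /=; apply/orP; right; vtx_arith.
  rewrite -[face_step _ _]/(face_step rot (chd x)) face_chd /=.
  have -> : (mate x == z0) = false by vtx_arith.
  by rewrite /= eqxx /=; apply/orP; left; vtx_arith.
- by rewrite !neighbours_neq.
- by rewrite eqxx; vtx_arith.
Qed.

Lemma full_n_faces : n_faces [set: T] e rot = if odd n then 1 else 2.
Proof.
have rot_ok := deg3_rotation_is_rotation (nb_rot_deg3 n_ge3 (pred1 z0)).
rewrite (n_faces_two (@neckband_sym n) rot_ok (d0 := full_face0) (d1 := full_face1)).
- by case: ifP => [/full_faces_joined -> // | /negbT /full_faces_split ->].
- by rewrite dart_setT adj_prv.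
- by rewrite dart_setT adj_nxt.
- exact: full_cover.
Qed.

End FullGraphFaces.

Section DeletedGraphFaces.
Variable n : nat.
Hypothesis n_ge3 : 3 <= n.
Local Notation N := (2 * n).
Local Notation T := 'I_(2 * n).
Local Notation e := (@neckband n).
Local Notation vtx := (vtx n_ge3).
Local Notation nxt := (nxt n_ge3).
Local Notation prv := (prv n_ge3).
Local Notation mate := (mate n_ge3).
Local Notation fwd := (fwd n_ge3).
Local Notation bwd := (bwd n_ge3).
Local Notation chd := (chd n_ge3).
Local Notation z0 := (vtx 0).
Local Notation rot := (del_rot n_ge3 z0).
Local Notation fc := (fconnect (face_step rot)).

Lemma del_fwd_step k : 0 < k -> k.+1 < N -> k.+1 != 3 ->
  fc (fwd (vtx k)) (chd (vtx k.+1)).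
Proof.
move=> k_gt0 lt_k k3; apply: fconnect_step.
rewrite face_fwd_del; [| by vtx_arith ..].
have -> : (mate (nxt (vtx k)) == z0) = false by vtx_arith.
by have -> : nxt (vtx k) = vtx k.+1 by vtx_arith.
Qed.

Lemma del_chd_step k : 0 < k < N -> mate (vtx k) != z0 -> nxt (mate (vtx k)) != z0 ->
  fc (chd (vtx k)) (fwd (mate (vtx k))).
Proof.
move=> k_range mate_ne nxt_ne; apply: fconnect_step.
by rewrite face_chd_del ?(negbTE nxt_ne) //; vtx_arith.
Qed.

Lemma del_bwd_step j : 3 <= j < N -> fc (bwd (vtx j)) (bwd (vtx j.-1)).
Proof.
move=> j_range; apply: fconnect_step.
rewrite face_bwd_del; [| by vtx_arith ..].
have -> : (prv (prv (vtx j)) == z0) = false by vtx_arith.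
by have -> : prv (vtx j) = vtx j.-1 by vtx_arith.
Qed.

Lemma del_fwd_up k : odd k -> k + 4 <= N - 2 -> fc (fwd (vtx k)) (fwd (vtx (k + 4))).
Proof.
move=> odd_k lt_k; apply: connect_trans (del_fwd_step _ _ _) _; try lia.
have mate_k1 : mate (vtx k.+1) = vtx (k + 4) by vtx_arith.
by rewrite -mate_k1; apply: del_chd_step; rewrite ?mate_k1; vtx_arith.
Qed.

Lemma del_fwd_down k : ~~ odd k -> 4 <= k <= N - 2 ->
  fc (fwd (vtx k)) (fwd (vtx (k - 2))).
Proof.
move=> even_k k_range; apply: connect_trans (del_fwd_step _ _ _) _; try lia.
have mate_k1 : mate (vtx k.+1) = vtx (k - 2) by vtx_arith.
by rewrite -mate_k1; apply: del_chd_step; rewrite ?mate_k1; vtx_arith.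
Qed.

Definition del_face0 := bwd (vtx (N - 1)).
Definition del_face1 := fwd (vtx 1).
Local Notation on_faces d := (fc del_face0 d || fc del_face1 d).

Lemma del_on_faces_trans a b : on_faces a -> fc a b -> on_faces b.
Proof. by case/orP=> conn ab; rewrite (connect_trans conn ab) ?orbT. Qed.

Lemma del_bwd_face j : 2 <= j < N -> fc del_face0 (bwd (vtx j)).
Proof.
move=> j_range.
apply: (@connect_chain_down _ _ (fun i => bwd (vtx i))) => [i i_range|]; last by lia.
by apply: del_bwd_step; lia.
Qed.

Lemma del_chd1_face : fc del_face0 (chd (vtx 1)).
Proof.
apply: connect_trans (del_bwd_face (j := 2) _) (fconnect_step _); first by lia.
rewrite face_bwd_del; [| by vtx_arith ..].
have -> : (prv (prv (vtx 2)) == z0) = true by vtx_arith.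
by have -> : prv (vtx 2) = vtx 1 by vtx_arith.
Qed.

Lemma del_fwd_even_face k : ~~ odd k -> 2 <= k <= N - 2 -> fc del_face0 (fwd (vtx k)).
Proof.
move=> even_k k_range.
have chd1 : fc (chd (vtx 1)) (fwd (vtx (2 * (n - 1)))).
  have mate1 : mate (vtx 1) = vtx (2 * (n - 1)) by vtx_arith.
  by rewrite -mate1; apply: del_chd_step; rewrite ?mate1; vtx_arith.
apply: connect_trans del_chd1_face (connect_trans chd1 _).
have -> : k = 2 * (k %/ 2) by lia.
apply: (@connect_chain_down _ _ (fun i => fwd (vtx (2 * i)))) => [i i_range|]; last by lia.
have -> : 2 * i.-1 = 2 * i - 2 by lia.
by apply: del_fwd_down; lia.
Qed.

Lemma del_fwd3_face : fc del_face0 (fwd (vtx 3)).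
Proof.
apply: connect_trans (del_fwd_even_face (k := 2) _ _) (fconnect_step _); try lia.
rewrite face_fwd_del; [| by vtx_arith ..].
have -> : (mate (nxt (vtx 2)) == z0) = true by vtx_arith.
by have -> : nxt (vtx 2) = vtx 3 by vtx_arith.
Qed.

Lemma del_fwd_run a i : odd a -> a + 4 * i <= N - 3 ->
  fc (fwd (vtx a)) (fwd (vtx (a + 4 * i))).
Proof.
move=> odd_a le_ai.
have := @connect_chain _ _ (fun j => fwd (vtx (a + 4 * j))) 0 i.
rewrite /= muln0 addn0; apply=> // j lt_j.
by rewrite mulnSr addnA; apply: del_fwd_up; lia.
Qed.

Lemma del_fwd_face k : 0 < k <= N - 2 -> on_faces (fwd (vtx k)).
Proof.
move=> k_range; case: (boolP (odd k)) => [odd_k | even_k]; last first.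
  by rewrite del_fwd_even_face //; lia.
case: (boolP (k %% 4 == 1)) => k_mod.
  have -> : k = 1 + 4 * (k %/ 4) by lia.
  by rewrite (del_fwd_run (a := 1)) ?orbT //; lia.
have -> : k = 3 + 4 * (k %/ 4) by lia.
by rewrite (connect_trans del_fwd3_face (del_fwd_run (a := 3) _ _)) //; lia.
Qed.

Lemma del_chd_face k : 0 < k < N -> k != 3 -> on_faces (chd (vtx k)).
Proof.
move=> k_range k3; case: (eqVneq k 1) => [-> | k1]; first by rewrite del_chd1_face.
apply: del_on_faces_trans (del_fwd_face (k := k.-1) _) _; first by lia.
have -> : k = k.-1.+1 by lia.
by apply: del_fwd_step; lia.
Qed.

Lemma del_cover d : dart ([set: T] :\ z0) e d -> on_faces d.
Proof.
case: d => x y; rewrite dart_del /= => /and3P [/neighbourP adj x0 y0].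
have lt_x := ltn_ord x; rewrite -(vtxK n_ge3 x) in x0 adj *.
case: adj => y_eq; rewrite y_eq in y0 *.
- by apply: del_fwd_face; move: x0 y0; vtx_arith.
- by rewrite del_bwd_face //; move: x0 y0; vtx_arith.
- by apply: del_chd_face; move: x0 y0; vtx_arith.
Qed.

Lemma del_faces_joined : odd n -> fc del_face0 del_face1.
Proof.
move=> odd_n; rewrite fconnect_sym; last exact: face_step_inj.
apply: connect_trans (del_fwd_run (a := 1) (i := (n - 3) %/ 2) _ _) _; try lia.
have -> : 1 + 4 * ((n - 3) %/ 2) = N - 5 by lia.
apply: connect_trans (del_fwd_step (k := N - 5) _ _ _) (fconnect_step _); try lia.
rewrite face_chd_del; [| by vtx_arith ..].
have -> : (nxt (mate (vtx (N - 5).+1)) == z0) = true by vtx_arith.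
by have -> : mate (vtx (N - 5).+1) = vtx (N - 1) by vtx_arith.
Qed.

(* For even n the face [quarter_face] survives the deletion of [vtx 0]. *)
Lemma del_faces_split : ~~ odd n -> ~~ fc del_face0 del_face1.
Proof.
move=> even_n; apply: (@stable_set_separates _ _ (quarter_face n_ge3));
  [exact: face_step_inj | move=> [x y] | | ]; rewrite /quarter_face /=.
- case/orP=> /andP [/eqP -> x_mod].
    rewrite -[face_step _ _]/(face_step rot (fwd x)) face_fwd_del; [| by vtx_arith ..].
    have -> : (mate (nxt x) == z0) = false by vtx_arith.
    by rewrite /= eqxx /=; apply/orP; right; vtx_arith.
  rewrite -[face_step _ _]/(face_step rot (chd x)) face_chd_del; [| by vtx_arith ..].
  have -> : (nxt (mate x) == z0) = false by vtx_arith.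
  by rewrite /= eqxx /=; apply/orP; left; vtx_arith.
- by rewrite !neighbours_neq.
- by rewrite eqxx; vtx_arith.
Qed.

Lemma del_n_faces : n_faces ([set: T] :\ z0) e rot = if odd n then 1 else 2.
Proof.
have rot_ok := deg3_rotation_is_rotation (del_rot_deg3 n_ge3 z0).
rewrite (n_faces_two (@neckband_sym n) rot_ok (d0 := del_face0) (d1 := del_face1)).
- by case: ifP => [/del_faces_joined -> // | /negbT /del_faces_split ->].
- by rewrite dart_del /= adj_prv; apply/andP; split; vtx_arith.
- by rewrite dart_del /= adj_nxt; apply/andP; split; vtx_arith.
- exact: del_cover.
Qed.

End DeletedGraphFaces.

Section NeckbandGenus.
Variable n : nat.
Hypothesis n_ge3 : 3 <= n.
Local Notation N := (2 * n).
Local Notation T := 'I_(2 * n).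
Local Notation e := (@neckband n).
Local Notation vtx := (vtx n_ge3).
Local Notation z0 := (vtx 0).

Lemma card_dart_full : #|dart [set: T] e| = 6 * n.
Proof.
rewrite card_dart (eq_bigr (fun=> 3)) => [|x _]; last exact: neckband_degree.
by rewrite sum_nat_const cardsT card_ord; lia.
Qed.

Lemma card_dart_deleted v : #|dart ([set: T] :\ v) e| = 6 * n - 6.
Proof.
have := card_dart_setD1 (@neckband_sym n) (@neckband_irr n n_ge3) (in_setT v).
by rewrite card_dart_full neckband_degree // => ->; rewrite addnK.
Qed.

Lemma card_deleted (v : T) : #|[set: T] :\ v| = N - 1.
Proof. by rewrite setTD cardsC1 card_ord subn1. Qed.

Lemma edges_full : n_edges [set: T] e = 3 * n.
Proof. by rewrite /n_edges card_dart_full; lia. Qed.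

Lemma edges_deleted v : n_edges ([set: T] :\ v) e = 3 * n - 3.
Proof. by rewrite /n_edges card_dart_deleted; lia. Qed.

(* Euler's formula with one face for odd n and two faces for even n. *)
Lemma full_max_genus : max_genus [set: T] e = (n + 1) %/ 2.
Proof.
apply: max_genus_eq => [|| k emb].
- apply/existsP; exists (nb_rot n_ge3 (pred1 z0)).
  rewrite (deg3_rotation_is_rotation (nb_rot_deg3 n_ge3 _)) /= (full_n_faces n_ge3).
  by rewrite cardsT card_ord edges_full; case: ifP => odd_n; lia.
- by rewrite card_dart_full; lia.
have nonempty : exists d, dart [set: T] e d.
  by exists (fwd n_ge3 z0); rewrite dart_setT adj_nxt.
have := genus_bound (@neckband_sym n) emb nonempty.
by rewrite cardsT card_ord edges_full; lia.
Qed.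

Lemma deleted_genus_bound v k :
  embeds_in_genus ([set: T] :\ v) e k -> k <= (n - 1) %/ 2.
Proof.
move=> emb; have nonempty : exists d, dart ([set: T] :\ v) e d.
  by apply/card_gt0P; rewrite card_dart_deleted; lia.
have := genus_bound (@neckband_sym n) emb nonempty.
by rewrite card_deleted edges_deleted; lia.
Qed.

Lemma deleted0_embeds : embeds_in_genus ([set: T] :\ z0) e ((n - 1) %/ 2).
Proof.
apply/existsP; exists (del_rot n_ge3 z0).
rewrite (deg3_rotation_is_rotation (del_rot_deg3 n_ge3 _)) /= (del_n_faces n_ge3).
by rewrite card_deleted edges_deleted; case: ifP => odd_n; lia.
Qed.

Lemma deleted0_connected : connected ([set: T] :\ z0) e.
Proof.
have induced_sym : connect_sym (induced ([set: T] :\ z0) e).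
  apply: sym_connect_sym => x y; rewrite /induced neckband_sym.
  by case: (x \in _); case: (y \in _).
have to_last x : x \in [set: T] :\ z0 ->
    connect (induced ([set: T] :\ z0) e) x (vtx (N - 1)).
  rewrite !inE andbT => x0; rewrite -(vtxK n_ge3 x).
  have x_gt0 : 0 < x by move: x0; vtx_arith.
  apply: (@connect_chain _ _ (fun i => vtx i)) => [i i_range|]; last by vtx_arith.
  apply: connect1; rewrite /induced !inE !andbT neckbandE.
  by apply/and3P; split; [ | | apply/orP; left]; vtx_arith.
move=> x y Ax Ay.
by apply: connect_trans (to_last x Ax) _; rewrite induced_sym; apply: to_last.
Qed.

End NeckbandGenus.

(* The neckband is vertex-transitive: for even v the rotation x |-> x + v,
   and for odd v the reflection x |-> v - x, is an automorphism sending
   vertex 0 to v. *)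
Section NeckbandSymmetry.
Variable n : nat.
Hypothesis n_ge3 : 3 <= n.
Local Notation N := (2 * n).
Local Notation T := 'I_(2 * n).
Local Notation e := (@neckband n).
Local Notation vtx := (vtx n_ge3).
Local Notation nxt := (nxt n_ge3).
Local Notation prv := (prv n_ge3).
Local Notation mate := (mate n_ge3).
Variable v : T.

Definition sym_map (x : T) : T := vtx (if odd v then v + N - x else v + x).

Lemma sym_map_inj : injective sym_map.
Proof. by move=> x y /(congr1 val) /= eq_xy; apply: ord_inj; move: eq_xy; mod_arith. Qed.

Lemma sym_map0 : sym_map (vtx 0) = v.
Proof. vtx_arith. Qed.

Lemma sym_map_nxt x : nxt (sym_map x) = sym_map (if odd v then prv x else nxt x).
Proof. by case: (odd v) / boolP => odd_v; vtx_arith. Qed.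

Lemma sym_map_prv x : prv (sym_map x) = sym_map (if odd v then nxt x else prv x).
Proof. by case: (odd v) / boolP => odd_v; vtx_arith. Qed.

Lemma sym_map_mate x : mate (sym_map x) = sym_map (mate x).
Proof. vtx_arith. Qed.

Definition sym_perm : {perm T} := perm sym_map_inj.

Lemma sym_perm_aut x y : e (sym_perm x) (sym_perm y) = e x y.
Proof.
rewrite !permE !neckbandE sym_map_nxt sym_map_prv sym_map_mate !(inj_eq sym_map_inj).
by case: (odd v); rewrite // orbCA.
Qed.

Lemma deleted_image : [set: T] :\ v = sym_perm @: ([set: T] :\ vtx 0).
Proof.
apply/setP => x; rewrite -[x](permKV sym_perm) mem_imset; last exact: perm_inj.
by rewrite !inE !andbT -[X in _ != X]sym_map0 permE (inj_eq sym_map_inj).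
Qed.

(* The theorem for vertex 0, transported to v. *)
Lemma deleted_connected : connected ([set: T] :\ v) e.
Proof.
rewrite deleted_image.
exact (connected_relabel sym_perm_aut (@deleted0_connected n n_ge3)).
Qed.

Lemma deleted_max_genus : max_genus ([set: T] :\ v) e = (n - 1) %/ 2.
Proof.
apply: (@max_genus_eq _ _ _ ((n - 1) %/ 2)).
- rewrite deleted_image.
  exact (embeds_relabel (@neckband_sym n) sym_perm_aut (deleted0_embeds n_ge3)).
- by rewrite card_dart_deleted; lia.
- exact: deleted_genus_bound.
Qed.

End NeckbandSymmetry.

Theorem theorem2p1 (n : nat) (hn : 3 <= n) (v : 'I_(2 * n)) :
  connected ([set: 'I_(2 * n)] :\ v) (@neckband n) /\
  max_genus ([set: 'I_(2 * n)] :\ v) (@neckband n) =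
    max_genus [set: 'I_(2 * n)] (@neckband n) - 1.
Proof.
split; first exact (@deleted_connected n hn v).
by rewrite (deleted_max_genus hn v) (full_max_genus hn); lia.
Qed.
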